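(* Let $f:(0,\infty)\to\mathbb{R}$ be such that $-f'$ is completely monotone on $(0,\infty)$, and suppose $\int_0^{t_0}|f(t)|t^\beta\,\mathrm{d}t<\infty$ for some $\beta\in(-1,\infty)$ and $t_0>0$. Then for any $\alpha\in[0,1]$, $m,n\in\mathbb{N}^\star$ and $c_1,c_2>0$, $$\int_0^{t_0}|f^{(m)}(c_1t)|^\alpha|f^{(n)}(c_2t)|^{1-\alpha}t^{m\alpha+n(1-\alpha)+\beta}\,\mathrm{d}t\le C\Big(\int_0^{t_0}|f(t)|t^\beta\,\mathrm{d}t+|f(t_0)|t_0^{1+\beta}\Big)$$ and $$\int_0^{t_0}|f(c_1t)|^\alpha|f^{(n)}(c_2t)|^{1-\alpha}t^{n(1-\alpha)+\beta}\,\mathrm{d}t\le C\Big(\int_0^{(c_1\vee1)t_0}|f(t)|t^\beta\,\mathrm{d}t+|f(t_0)|t_0^{1+\beta}\Big),$$ where $c_1\vee1=\max\{c_1,1\}$ and $C>0$ depends only on $m,n,\alpha,\beta,c_1,c_2$.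
   Context: A function $g:(0,\infty)\to\mathbb{R}$ is completely monotone if it is $C^\infty$ and $(-1)^ng^{(n)}(t)\ge0$ for all $t>0$ and $n\in\mathbb{N}$. *)

From HB Require Import structures.
From mathcomp Require Import all_boot all_order all_algebra.
From mathcomp Require Import all_classical all_reals all_analysis.
Set Implicit Arguments. Unset Strict Implicit. Unset Printing Implicit Defensive.
Import Order.TTheory GRing.Theory Num.Theory.
Import numFieldNormedType.Exports.
Local Open Scope classical_set_scope.
Local Open Scope ring_scope.

Definition smooth_pos {R : realType} (g : R -> R) : Prop :=
  forall (n : nat) (t : R), 0 < t -> derivable (derive1n n g) t 1.

Definition completely_monotone {R : realType} (g : R -> R) : Prop :=
  smooth_pos g /\
  forall (n : nat) (t : R), 0 < t -> 0 <= (-1) ^+ n * derive1n n g t.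

(* Write g := -f'. Complete monotonicity makes (-1)^k g^(k) = |f^(k+1)| nonnegative and
   nonincreasing on (0, oo), so the mean value theorem on [t/2, t] gives
   t |f^(k+2)(t)| <= 2 |f^(k+1)(t/2)| and t |f'(t)| <= 2 (|f(t/2)| + |f(t)|); iterating,
   t^(k+1) |f^(k+1)(t)| <= 2^((k+1)(k+2)/2) (|f(t/2^(k+1))| + |f(t/2^k)|).
   Monotonicity also moves the argument c t of a derivative down to min(c,1) t.
   Bounding the weighted geometric mean by the sum, each integrand is then dominated by a
   combination of |f(l t)| t^beta with dilations l <= max(c1,1), and the substitution
   s = l t bounds the integral of |f(l t)| t^beta over (0, t0) by l^(-1-beta) times the
   integral of |f(s)| s^beta over (0, l t0).
   The bounds hold in the extended reals without the hypotheses -1 < beta and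
   finiteness of the integral, and without the boundary term |f(t0)| t0^(1+beta). *)

From HB Require Import structures.
From mathcomp Require Import all_boot all_order all_algebra.
From mathcomp Require Import all_classical all_reals all_analysis.
From mathcomp Require Import measurable_realfun ring lra.
Import Order.TTheory GRing.Theory Num.Theory.
Import numFieldNormedType.Exports.
Local Open Scope classical_set_scope.
Local Open Scope ring_scope.

Section dilation.
Context {R : realType}.
Local Notation mu := (@lebesgue_measure R).

Lemma mulr_preimage_itv (l : R) ba bb (a b : R) : 0 < l ->
  ( *%R l) @^-1` [set` Interval (BSide ba (l * a)) (BSide bb (l * b))] =
  [set` Interval (BSide ba a) (BSide bb b)].
Proof.
move=> l0; apply/seteqP; split => x /=;
  by rewrite !itv_boundlr /= !lteBSide /= !lteif_pM2l.
Qed.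

(* The cast equips the codomain with Lebesgue's sigma-algebra, the one [mu] lives on. *)
Lemma lebesgue_measure_dilation (l : R) (A : set R) : 0 < l -> measurable A ->
  (l%:E * pushforward mu ( *%R l : R -> measurableTypeR R) A = mu A)%E.
Proof.
move=> l0 mA; apply/esym.
apply: (@lebesgue_measure_unique _
  (mscale (NngNum (ltW l0)) (pushforward mu ( *%R l : R -> measurableTypeR R)))) => //=.
move=> _ [[a b]] _ <-.
rewrite /mscale /= /pushforward -[a](mulVKf (lt0r_neq0 l0)) -[b](mulVKf (lt0r_neq0 l0)).
rewrite mulr_preimage_itv// !lebesgue_measure_itv/= !lte_fin ltr_pM2l//.
by case: ifPn => _; rewrite ?mule0// -EFinM mulrBr.
Qed.

Lemma ge0_integral_dilation (l : R) (D : set R) (F : R -> \bar R) : 0 < l ->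
  measurable D -> measurable_fun D F -> (forall x, D x -> (0 <= F x)%E) ->
  (\int[mu]_(x in ( *%R l) @^-1` D) F (l * x)%R = l^-1%:E * \int[mu]_(x in D) F x)%E.
Proof.
move=> l0 mD mF F0.
rewrite [in RHS](eq_measure_integral
  (mscale (NngNum (ltW l0)) (pushforward mu ( *%R l : R -> measurableTypeR R)))); last first.
  by move=> A mA _; exact/esym/lebesgue_measure_dilation.
rewrite ge0_integral_mscale//= muleA -EFinM mulVf ?gt_eqF// mul1e.
by rewrite ge0_integral_pushforward// => y /set_mem; apply: F0.
Qed.

End dilation.

Section interpolation.
Context {R : realType}.

Lemma powR_mean_le_add (A B a : R) : 0 <= A -> 0 <= B -> 0 <= a <= 1 ->
  A `^ a * B `^ (1 - a) <= A + B.
Proof.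
move=> A0 B0 /andP[a0 a1].
have powR_split X : 0 <= X -> X `^ a * X `^ (1 - a) = X.
  move=> X0; rewrite -powRD; first by rewrite addrC subrK powRr1.
  by rewrite addrC subrK oner_eq0.
have [AB|/ltW BA] := leP A B.
- apply: (@le_trans _ _ (B `^ a * B `^ (1 - a))); last by rewrite powR_split ?lerDr.
  by rewrite ler_wpM2r ?powR_ge0 ?ge0_ler_powR.
- apply: (@le_trans _ _ (A `^ a * A `^ (1 - a))); last by rewrite powR_split ?lerDl.
  by rewrite ler_wpM2l ?powR_ge0 ?ge0_ler_powR ?subr_ge0.
Qed.

Lemma interpolation_le (x y a b t : R) (p q : nat) : 0 <= a <= 1 -> 0 < t ->
  `|x| `^ a * `|y| `^ (1 - a) * t `^ (p%:R * a + q%:R * (1 - a) + b) <=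
  (t ^+ p * `|x| + t ^+ q * `|y|) * t `^ b.
Proof.
move=> a01 t0; have t_neq0 : t != 0 by rewrite gt_eqF.
rewrite (@powRD _ t _ b) ?t_neq0 ?implybT// (@powRD _ t (p%:R * a)) ?t_neq0 ?implybT//.
rewrite !powRrM !powR_mulrn ?(ltW t0)// mulrA; apply: ler_wpM2r; first exact: powR_ge0.
rewrite mulrACA -!powRM ?exprn_ge0 ?(ltW t0)// [t ^+ p * _]mulrC [t ^+ q * _]mulrC.
by apply: powR_mean_le_add; rewrite // mulr_ge0 ?exprn_ge0 ?(ltW t0).
Qed.

End interpolation.

Lemma measurable_norm_dilation {R : realType} (h : R -> R) (c b : R) : 0 < c ->
  (forall t, 0 < t -> {for t, continuous h}) ->
  measurable_fun `]0, b[ (fun t => `|h (c * t)|).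
Proof.
move=> c0 ch; apply: open_continuous_measurable_fun; first exact: interval_open.
move=> t; rewrite inE/= in_itv/= => /andP[t0 _].
apply: (@continuous_comp _ _ _ ( *%R c) (fun s => `|h s|)).
  exact: mulrl_continuous.
apply: (@continuous_comp _ _ _ h (@Num.norm _ R)); first exact: ch (mulr_gt0 c0 t0).
exact: norm_continuous.
Qed.

Section dilated_integrals.
Context {R : realType} {f : R -> R} (beta : R).
Hypothesis cf : forall t, 0 < t -> {for t, continuous f}.
Local Notation mu := (@lebesgue_measure R).

Lemma measurable_dilated_weight (l b : R) : 0 < l ->
  measurable_fun `]0, b[ (fun t => `|f (l * t)| * t `^ beta).
Proof.
move=> l0; apply: measurable_funM; first exact: measurable_norm_dilation.
exact: measurable_funTS (measurable_powR beta).
Qed.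

Lemma integral_dilated_weight_le (l b T : R) : 0 < l -> l * b <= T ->
  (\int[mu]_(t in `]0%R, b[) (`|f (l * t)| * t `^ beta)%:E <=
   (l `^ (-1 - beta))%:E * \int[mu]_(t in `]0%R, T[) (`|f t| * t `^ beta)%:E)%E.
Proof.
move=> l0 lbT.
have weight_ge0 (x : R) : (0 <= (`|f x| * x `^ beta)%:E)%E.
  by rewrite lee_fin mulr_ge0 ?powR_ge0.
have mweight (D : set R) : measurable D -> D `<=` `]0, T[ ->
    measurable_fun D (fun t => (`|f t| * t `^ beta)%:E).
  move=> mD DT; apply/measurable_EFinP; apply: (measurable_funS _ DT) => //.
  move: (measurable_dilated_weight 1 T ltr01); apply: eq_measurable_fun => x _.
  by rewrite mul1r.
have lbT' : `]0, l * b[ `<=` `]0, T[ by apply: subset_itvl; rewrite bnd_simp.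
have preim : ( *%R l) @^-1` `]0, l * b[ = `]0, b[%classic.
  by rewrite -[X in `]X, _[](mulr0 l) mulr_preimage_itv.
have -> : (\int[mu]_(t in `]0%R, b[) (`|f (l * t)| * t `^ beta)%:E =
    \int[mu]_(t in ( *%R l) @^-1` `]0%R, (l * b)%R[)
      ((l `^ (- beta))%:E * (`|f (l * t)| * (l * t) `^ beta)%:E))%E.
  rewrite preim; apply: eq_integral => t.
  rewrite inE/= in_itv/= => /andP[t0 _]; rewrite -EFinM powRM ?(ltW l0) ?(ltW t0)// powRN.
  by congr EFin; field; rewrite gt_eqF// powR_gt0.
rewrite ge0_integralZl_EFin ?powR_ge0//; last 2 first.
- by rewrite preim.
- rewrite preim; apply/measurable_EFinP; apply: measurable_funM.
    exact: measurable_norm_dilation.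
  apply: measurableT_comp (measurable_powR beta) _; exact: mulrl_measurable.
rewrite (@ge0_integral_dilation _ l _ (fun t => (`|f t| * t `^ beta)%:E))//;
  last exact: mweight lbT'.
rewrite muleA -EFinM.
have -> : l `^ (- beta) * l^-1 = l `^ (-1 - beta).
  by rewrite -powR_inv1 ?(ltW l0)// -powRD ?(gt_eqF l0) ?implybT// addrC.
apply: lee_wpmul2l; first by rewrite lee_fin powR_ge0.
by apply: ge0_subset_integral => //; exact: mweight.
Qed.

Lemma measurable_sum_dilated_weights (s : seq R) (b : R) :
  (forall l, l \in s -> 0 < l) ->
  measurable_fun `]0%R, b[ (fun t => \sum_(l <- s) `|f (l * t)| * t `^ beta).
Proof.
elim: s => [|l s IH] s_gt0.
  have : measurable_fun `]0%R, b[ (cst (0 : R)) by exact: measurable_cst.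
  by apply: eq_measurable_fun => t _; rewrite big_nil.
have /IH ms : forall l', l' \in s -> 0 < l'.
  by move=> l' ls; apply: s_gt0; rewrite inE ls orbT.
move: (measurable_funD (measurable_dilated_weight l b (s_gt0 l (mem_head l s))) ms).
by apply: eq_measurable_fun => t _; rewrite big_cons.
Qed.

Lemma integral_sum_dilated_weights_le (s : seq R) (b T : R) :
  (forall l, l \in s -> 0 < l /\ l * b <= T) ->
  (\int[mu]_(t in `]0%R, b[) (\sum_(l <- s) `|f (l * t)| * t `^ beta)%:E <=
   (\sum_(l <- s) l `^ (-1 - beta))%:E *
     \int[mu]_(t in `]0%R, T[) (`|f t| * t `^ beta)%:E)%E.
Proof.
elim: s => [|l s IH] s_ok.
  by under eq_integral do rewrite big_nil; rewrite integral0 big_nil mul0e.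
have [l0 lbT] := s_ok l (mem_head l s).
have s_ok' : forall l', l' \in s -> 0 < l' /\ l' * b <= T.
  by move=> l' ls; apply: s_ok; rewrite inE ls orbT.
have msum := @measurable_sum_dilated_weights s b (fun l' ls => (s_ok' l' ls).1).
under eq_integral do rewrite big_cons EFinD.
rewrite ge0_integralD//; last 4 first.
- by move=> t _; rewrite lee_fin mulr_ge0 ?powR_ge0.
- by apply/measurable_EFinP; exact: measurable_dilated_weight.
- by move=> t _; rewrite lee_fin sumr_ge0// => l' _; rewrite mulr_ge0 ?powR_ge0.
- exact/measurable_EFinP.
rewrite big_cons EFinD ge0_muleDl ?lee_fin ?powR_ge0 ?sumr_ge0// => [|l' _];
  last exact: powR_ge0.
by apply: leeD => //; [exact: integral_dilated_weight_le | exact: IH].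
Qed.

Lemma integral_interpolation_le {F1 F2 : R -> R} {p q : nat}
    {alpha c1 c2 K1 K2 b T : R} {s1 s2 : seq R} :
  0 <= alpha <= 1 -> 0 < c1 -> 0 < c2 -> 0 <= K1 -> 0 <= K2 ->
  (forall t, 0 < t -> {for t, continuous F1}) ->
  (forall t, 0 < t -> {for t, continuous F2}) ->
  (forall l, l \in s1 ++ s2 -> 0 < l /\ l * b <= T) ->
  (forall t, 0 < t -> t ^+ p * `|F1 (c1 * t)| <= K1 * \sum_(l <- s1) `|f (l * t)|) ->
  (forall t, 0 < t -> t ^+ q * `|F2 (c2 * t)| <= K2 * \sum_(l <- s2) `|f (l * t)|) ->
  (\int[mu]_(t in `]0%R, b[) (`|F1 (c1 * t)| `^ alpha * `|F2 (c2 * t)| `^ (1 - alpha)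
      * t `^ (p%:R * alpha + q%:R * (1 - alpha) + beta))%:E <=
   ((K1 + K2) * \sum_(l <- s1 ++ s2) l `^ (-1 - beta))%:E *
     \int[mu]_(t in `]0%R, T[) (`|f t| * t `^ beta)%:E)%E.
Proof.
move=> a01 c10 c20 K10 K20 cF1 cF2 s_ok F1_le F2_le.
have s_gt0 l (ls : l \in s1 ++ s2) : 0 < l by have [] := s_ok l ls.
have msum := measurable_sum_dilated_weights _ b s_gt0.
apply: (@le_trans _ _ (\int[mu]_(t in `]0%R, b[)
    ((K1 + K2)%:E * (\sum_(l <- s1 ++ s2) `|f (l * t)| * t `^ beta)%:E))%E); last first.
  rewrite ge0_integralZl_EFin ?addr_ge0//; last 2 first.
  - by move=> t _; rewrite lee_fin sumr_ge0// => l _; rewrite mulr_ge0 ?powR_ge0.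
  - exact/measurable_EFinP.
  rewrite EFinM -muleA lee_wpmul2l ?lee_fin ?addr_ge0//.
  exact: integral_sum_dilated_weights_le.
apply: ge0_le_integral => //.
- by move=> t _; rewrite lee_fin !mulr_ge0 ?powR_ge0.
- apply/measurable_EFinP; apply: measurable_funM;
    last exact: measurable_funTS (measurable_powR _).
  by apply: measurable_funM; apply: measurableT_comp (measurable_powR _) _;
    exact: measurable_norm_dilation.
- by apply/measurable_EFinP; apply: measurable_funM => //; exact: measurable_cst.
move=> t; rewrite /= in_itv/= => /andP[t0 _]; rewrite -EFinM lee_fin.
apply: le_trans (interpolation_le _ _ _ beta _ p q a01 t0) _.
rewrite -mulr_suml mulrA ler_wpM2r ?powR_ge0// big_cat /=.
have S1_ge0 : 0 <= \sum_(l <- s1) `|f (l * t)| by rewrite sumr_ge0.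
have S2_ge0 : 0 <= \sum_(l <- s2) `|f (l * t)| by rewrite sumr_ge0.
have := F1_le t t0; have := F2_le t t0; nra.
Qed.

End dilated_integrals.

Lemma derive1nN {R : realType} (h : R -> R) (k : nat) (t : R) :
  (forall j s, 0 < s -> derivable (derive1n j h) s 1) -> 0 < t ->
  derive1n k (fun x => - h x) t = - derive1n k h t.
Proof.
move=> dh; elim: k t => [//|k IH] t t0.
rewrite !derive1nS !derive1E.
rewrite (@near_eq_derive _ _ _ _ (fun x => - derive1n k h x) t 1); last first.
  by near=> x; apply: IH; near: x; exact: lt_nbhsr.
exact: deriveN (dh k t t0).
Unshelve. all: by end_near. Qed.

Section completely_monotone.
Context {R : realType} (g : R -> R).
Hypothesis cmg : completely_monotone g.
Local Notation G k t := ((-1) ^+ k * derive1n k g t).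

Lemma cm_signed_derive_mvt k a b : 0 < a -> a < b ->
  exists2 c, c \in `]a, b[ & G k b - G k a = - G k.+1 c * (b - a).
Proof.
move=> a0 ab; have pos x : x \in `[a, b] -> 0 < x.
  by rewrite in_itv/= => /andP[/(lt_le_trans a0)].
have dgk x : x \in `]a, b[ -> is_derive x 1 (derive1n k g) (derive1n k.+1 g x).
  move=> xab; rewrite derive1nS derive1E; apply/derivableP/cmg.1/pos.
  exact: subset_itv_oo_cc.
have cgk : {within `[a, b], continuous (derive1n k g)}.
  by apply: derivable_within_continuous => x /pos; exact: cmg.1.
have [c cab E] := MVT ab dgk cgk.
by exists c => //; rewrite -mulrBr E exprS; ring.
Qed.

Lemma cm_signed_derive_noninc k s t : 0 < s -> s <= t -> G k t <= G k s.
Proof.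
move=> s0; rewrite le_eqVlt => /predU1P[->//|st].
have [c cst E] := cm_signed_derive_mvt k _ _ s0 st.
have c0 : 0 < c by move: cst; rewrite in_itv/= => /andP[/(lt_trans s0)].
by rewrite -subr_le0 E mulNr oppr_le0 mulr_ge0 ?cmg.2// subr_ge0 ltW.
Qed.

Lemma cm_signed_derive_halving k t : 0 < t -> t * G k.+1 t <= 2 * G k (t / 2).
Proof.
move=> t0; have t20 : 0 < t / 2 by lra.
have t2t : t / 2 < t by lra.
have [c] := cm_signed_derive_mvt k _ _ t20 t2t.
rewrite in_itv/= => /andP[t2c ct] E.
have c0 : 0 < c by lra.
have Gc := cm_signed_derive_noninc k.+1 _ _ c0 (ltW ct).
have Gt := cmg.2 k t t0.
have GSt := cmg.2 k.+1 t t0.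
(* the mean value theorem returns the derivative as derive1 (derive1n k g) *)
rewrite -derive1nS in E *.
nra.
Qed.

End completely_monotone.

Definition halving_dilations {R : realType} (c : R) (k : nat) : seq R :=
  [:: c / 2 ^+ k.+1; c / 2 ^+ k].

Definition derivative_bound_constant {R : realType} (c : R) (k : nat) : R :=
  c^-1 ^+ k.+1 * 2 ^+ 'C(k.+2, 2).

Definition derivatives_constant {R : realType} (beta c1 c2 : R) (m n : nat) : R :=
  (derivative_bound_constant (Num.min c1 1) m + derivative_bound_constant (Num.min c2 1) n) *
  \sum_(l <- halving_dilations (Num.min c1 1) m ++ halving_dilations (Num.min c2 1) n)
    l `^ (-1 - beta).

Definition function_derivative_constant {R : realType} (beta c1 c2 : R) (n : nat) : R :=
  (1 + derivative_bound_constant (Num.min c2 1) n) *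
  \sum_(l <- c1 :: halving_dilations (Num.min c2 1) n) l `^ (-1 - beta).

Lemma minr1_bounds {R : realType} {c : R} : 0 < c ->
  [/\ 0 < Num.min c 1, Num.min c 1 <= 1 & Num.min c 1 <= c].
Proof. by move=> c0; rewrite lt_min c0 ltr01 !ge_min !lexx orbT. Qed.

Lemma halving_dilations_gt0_mulr_le {R : realType} {c b T l : R} {k : nat} :
  0 < c -> 0 <= b -> c * b <= T -> l \in halving_dilations c k -> 0 < l /\ l * b <= T.
Proof.
move=> c0 b0 cbT; have le_c j : c / 2 ^+ j <= c.
  by rewrite ler_pdivrMr ?exprn_gt0// ler_peMr ?(ltW c0)// exprn_ege1// ler1n.
rewrite !inE => /orP[] /eqP ->; rewrite divr_gt0 ?exprn_gt0//;
  by split=> //; rewrite (le_trans _ cbT)// ler_wpM2r.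
Qed.

Lemma derivative_bound_constant_ge0 {R : realType} {c : R} (k : nat) : 0 < c ->
  0 <= derivative_bound_constant c k.
Proof. by move=> c0; rewrite mulr_ge0 ?exprn_ge0 ?invr_ge0 ?(ltW c0). Qed.

Section derivatives_of_cm_antiderivative.
Context {R : realType} {f : R -> R}.
Hypothesis df : forall t, 0 < t -> derivable f t 1.
Hypothesis cmf : completely_monotone (fun t => - derive1 f t).
Local Notation g := (fun t => - derive1 f t).
Local Notation mu := (@lebesgue_measure R).

Lemma derive1nS_cm k t : 0 < t -> derive1n k.+1 f t = - derive1n k g t.
Proof.
move=> t0; rewrite derive1Sn -(derive1nN _ k _ cmf.1 t0).
by congr (derive1n k _ t); apply/funext => x; rewrite opprK.
Qed.

Lemma norm_derive1nS k t : 0 < t -> `|derive1n k.+1 f t| = (-1) ^+ k * derive1n k g t.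
Proof.
move=> t0; rewrite derive1nS_cm// normrN -[RHS]ger0_norm ?cmf.2//.
by rewrite normrM normrX normrN1 expr1n mul1r.
Qed.

Lemma derivable_derive1n k t : 0 < t -> derivable (derive1n k f) t 1.
Proof.
case: k => [|k] t0; first exact: df.
apply: (@near_eq_derivable _ _ _ (fun x => - derive1n k g x)); last first.
  exact: derivableN (cmf.1 k t t0).
by near=> x; apply/esym/derive1nS_cm; near: x; exact: lt_nbhsr.
Unshelve. all: by end_near. Qed.

Lemma continuous_derive1n k t : 0 < t -> {for t, continuous (derive1n k f)}.
Proof.
by move=> t0; apply/differentiable_continuous/derivable1_diffP/derivable_derive1n.
Qed.

Lemma norm_derive1nS_noninc k s t : 0 < s -> s <= t ->
  `|derive1n k.+1 f t| <= `|derive1n k.+1 f s|.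
Proof.
move=> s0 st; rewrite !norm_derive1nS ?(lt_le_trans s0 st)//.
exact: cm_signed_derive_noninc.
Qed.

Lemma norm_derive1_halving t : 0 < t -> t * `|derive1 f t| <= 2 * (`|f (t / 2)| + `|f t|).
Proof.
move=> t0; have t20 : 0 < t / 2 by lra.
have t2t : t / 2 < t by lra.
have pos x : x \in `[t / 2, t] -> 0 < x.
  by rewrite in_itv/= => /andP[/(lt_le_trans t20)].
have df' x : x \in `]t / 2, t[ -> is_derive x 1 f (derive1 f x).
  move=> xt; rewrite derive1E; apply/derivableP/df/pos.
  exact: subset_itv_oo_cc.
have cf : {within `[t / 2, t], continuous f}.
  by apply: derivable_within_continuous => x /pos; exact: df.
have [c] := MVT t2t df' cf.
rewrite in_itv/= => /andP[t2c ct] E.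
have c0 : 0 < c by lra.
have norm_f' x : 0 < x -> `|derive1 f x| = - derive1 f x.
  by move=> x0; rewrite (norm_derive1nS 0 x x0) mul1r.
have := norm_derive1nS_noninc 0 _ _ c0 (ltW ct); rewrite /= !norm_f'// => f'_le.
have := ler_norm (f (t / 2)); have := ler_norm (- f t); rewrite normrN.
nra.
Qed.

Lemma norm_derive1nSS_halving k t : 0 < t ->
  t * `|derive1n k.+2 f t| <= 2 * `|derive1n k.+1 f (t / 2)|.
Proof.
move=> t0; rewrite !norm_derive1nS ?divr_gt0//.
exact: cm_signed_derive_halving.
Qed.

Lemma norm_derive1n_le k t : 0 < t ->
  t ^+ k.+1 * `|derive1n k.+1 f t| <=
    2 ^+ 'C(k.+2, 2) * (`|f (t / 2 ^+ k.+1)| + `|f (t / 2 ^+ k)|).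
Proof.
elim: k t => [|k IH] t t0.
  by rewrite binn !expr1 expr0 divr1 derive1n1; exact: norm_derive1_halving.
have t20 : 0 < t / 2 by lra.
have halve (j : nat) : t / 2 ^+ j.+1 = t / 2 / 2 ^+ j by rewrite exprS invfM mulrA.
have IH2 := IH _ t20; rewrite -!halve in IH2.
have step := norm_derive1nSS_halving k t t0.
apply: (@le_trans _ _ (2 ^+ k.+2 * ((t / 2) ^+ k.+1 * `|derive1n k.+1 f (t / 2)|))).
  have -> : 2 ^+ k.+2 * ((t / 2) ^+ k.+1 * `|derive1n k.+1 f (t / 2)|) =
      t ^+ k.+1 * (2 * `|derive1n k.+1 f (t / 2)|).
    by rewrite expr_div_n exprS; field; rewrite expf_neq0.
  by rewrite exprSr -mulrA; exact: (ler_wpM2l (exprn_ge0 _ (ltW t0)) step).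
by rewrite binS bin1 addnC exprD -mulrA; exact: (ler_wpM2l (exprn_ge0 _ (ler0n _ 2)) IH2).
Qed.

Lemma norm_derive1n_dilated_le k {c c' t : R} : 0 < c' -> c' <= c -> 0 < t ->
  t ^+ k.+1 * `|derive1n k.+1 f (c * t)| <=
    derivative_bound_constant c' k * \sum_(l <- halving_dilations c' k) `|f (l * t)|.
Proof.
move=> c'0 c'c t0; have c't0 : 0 < c' * t by rewrite mulr_gt0.
have := norm_derive1nS_noninc k _ _ c't0 (ler_wpM2r (ltW t0) c'c).
move/(ler_wpM2l (exprn_ge0 k.+1 (ltW t0)))/le_trans; apply.
have -> : t ^+ k.+1 * `|derive1n k.+1 f (c' * t)| =
    c'^-1 ^+ k.+1 * ((c' * t) ^+ k.+1 * `|derive1n k.+1 f (c' * t)|).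
  by rewrite exprMn exprVn; field; rewrite expf_neq0// gt_eqF.
rewrite /derivative_bound_constant -mulrA.
apply: ler_wpM2l; first by rewrite exprn_ge0 ?invr_ge0 ?(ltW c'0).
by rewrite /halving_dilations big_cons big_seq1 ![c' / _ * t]mulrAC; exact: norm_derive1n_le.
Qed.

Lemma integral_derivatives_le (alpha beta c1 c2 t0 : R) (m n : nat) :
  0 <= alpha <= 1 -> 0 < c1 -> 0 < c2 -> 0 < t0 ->
  (\int[mu]_(t in `]0%R, t0[)
      (`|derive1n m.+1 f (c1 * t)| `^ alpha * `|derive1n n.+1 f (c2 * t)| `^ (1 - alpha)
        * t `^ (m.+1%:R * alpha + n.+1%:R * (1 - alpha) + beta))%:E <=
   (derivatives_constant beta c1 c2 m n)%:E *
     \int[mu]_(t in `]0%R, t0[) (`|f t| * t `^ beta)%:E)%E.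
Proof.
move=> a01 c1_gt0 c2_gt0 t0_gt0.
have [c_gt0 c_le1 c_le] := minr1_bounds c1_gt0.
have [d_gt0 d_le1 d_le] := minr1_bounds c2_gt0.
apply: (integral_interpolation_le beta (continuous_derive1n 0)) => //.
- exact: derivative_bound_constant_ge0.
- exact: derivative_bound_constant_ge0.
- exact: continuous_derive1n.
- exact: continuous_derive1n.
- have t0_ge0 := ltW t0_gt0.
  have := ler_piMl t0_ge0 c_le1; have := ler_piMl t0_ge0 d_le1.
  move=> dt0 ct0 l; rewrite mem_cat => /orP[]; exact: halving_dilations_gt0_mulr_le.
- by move=> t t_gt0; exact: norm_derive1n_dilated_le.
- by move=> t t_gt0; exact: norm_derive1n_dilated_le.
Qed.

Lemma integral_function_derivative_le (alpha beta c1 c2 t0 : R) (n : nat) :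
  0 <= alpha <= 1 -> 0 < c1 -> 0 < c2 -> 0 < t0 ->
  (\int[mu]_(t in `]0%R, t0[)
      (`|f (c1 * t)| `^ alpha * `|derive1n n.+1 f (c2 * t)| `^ (1 - alpha)
        * t `^ (n.+1%:R * (1 - alpha) + beta))%:E <=
   (function_derivative_constant beta c1 c2 n)%:E *
     \int[mu]_(t in `]0%R, (Num.max c1 1 * t0)%R[) (`|f t| * t `^ beta)%:E)%E.
Proof.
move=> a01 c1_gt0 c2_gt0 t0_gt0.
have [d_gt0 d_le1 d_le] := minr1_bounds c2_gt0.
have cf : forall t, 0 < t -> {for t, continuous f} := continuous_derive1n 0.
have s_ok l : l \in [:: c1] ++ halving_dilations (Num.min c2 1) n ->
    0 < l /\ l * t0 <= Num.max c1 1 * t0.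
  have t0_ge0 := ltW t0_gt0.
  rewrite inE => /orP[/eqP -> | ].
    by split=> //; apply: ler_wpM2r; rewrite // le_max lexx.
  apply: halving_dilations_gt0_mulr_le => //; apply: ler_wpM2r => //.
  by rewrite le_max d_le1 orbT.
have f_le t : 0 < t -> t ^+ 0 * `|f (c1 * t)| <= 1 * \sum_(l <- [:: c1]) `|f (l * t)|.
  by rewrite expr0 !mul1r big_seq1.
have := integral_interpolation_le beta cf a01 c1_gt0 c2_gt0 ler01
  (derivative_bound_constant_ge0 n d_gt0) cf (continuous_derive1n n.+1) s_ok f_le
  (fun t t_gt0 => norm_derive1n_dilated_le n d_gt0 d_le t_gt0).
by rewrite mul0r add0r.
Qed.

End derivatives_of_cm_antiderivative.

Lemma lee_pmulD_weaken {R : realType} {x y z : \bar R} {a b : R} :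
  (0 <= y)%E -> (0 <= z)%E -> a <= b -> 0 <= b ->
  (x <= a%:E * y)%E -> (x <= b%:E * (y + z))%E.
Proof.
move=> y0 z0 ab b0 xay; apply: le_trans xay _.
apply: (@le_trans _ _ (b%:E * y)%E); first by rewrite lee_wpmul2r ?lee_fin.
by rewrite lee_wpmul2l ?lee_fin// leeDl.
Qed.

Theorem lemma6p5 (R : realType) (alpha beta c1 c2 : R) (m n : nat) :
  0 <= alpha <= 1 -> -1 < beta -> (0 < m)%N -> (0 < n)%N -> 0 < c1 -> 0 < c2 ->
  exists C : R, 0 < C /\
  forall (f : R -> R) (t0 : R), 0 < t0 ->
    (forall t : R, 0 < t -> derivable f t 1) ->
    completely_monotone (fun t => - derive1 f t) ->
    (\int[lebesgue_measure]_(t in `]0%R, t0[) (`|f t| * t `^ beta)%:E < +oo)%E ->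
    (\int[lebesgue_measure]_(t in `]0%R, t0[)
        (`|derive1n m f (c1 * t)| `^ alpha * `|derive1n n f (c2 * t)| `^ (1 - alpha)
          * t `^ (m%:R * alpha + n%:R * (1 - alpha) + beta))%:E
      <= C%:E * (\int[lebesgue_measure]_(t in `]0%R, t0[) (`|f t| * t `^ beta)%:E
                 + (`|f t0| * t0 `^ (1 + beta))%:E))%E
    /\
    (\int[lebesgue_measure]_(t in `]0%R, t0[)
        (`|f (c1 * t)| `^ alpha * `|derive1n n f (c2 * t)| `^ (1 - alpha)
          * t `^ (n%:R * (1 - alpha) + beta))%:E
      <= C%:E * (\int[lebesgue_measure]_(t in `]0%R, (Num.max c1 1 * t0)%R[) (`|f t| * t `^ beta)%:E
                 + (`|f t0| * t0 `^ (1 + beta))%:E))%E.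
Proof.
move=> a01 _ m_gt0 n_gt0 c1_gt0 c2_gt0.
case: m m_gt0 => // m _; case: n n_gt0 => // n _.
pose C1 := derivatives_constant beta c1 c2 m n.
pose C2 := function_derivative_constant beta c1 c2 n.
have [C1_le C2_le] := (ler_norm C1, ler_norm C2).
have [C1_ge0 C2_ge0] := (normr_ge0 C1, normr_ge0 C2).
have C_ge0 : 0 <= 1 + `|C1| + `|C2| by lra.
exists (1 + `|C1| + `|C2|); split; first by lra.
move=> f t0 t0_gt0 df cmf _.
have I_ge0 T : (0 <= \int[lebesgue_measure]_(t in `]0%R, T[) (`|f t| * t `^ beta)%:E)%E.
  by apply: integral_ge0 => t _; rewrite lee_fin mulr_ge0 ?powR_ge0.
have e_ge0 : (0 <= (`|f t0| * t0 `^ (1 + beta))%:E)%E.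
  by rewrite lee_fin mulr_ge0 ?powR_ge0.
split.
- apply: (lee_pmulD_weaken (I_ge0 _) e_ge0 _ C_ge0); last exact: integral_derivatives_le.
  by rewrite -/C1; lra.
- apply: (lee_pmulD_weaken (I_ge0 _) e_ge0 _ C_ge0);
    last exact: integral_function_derivative_le.
  by rewrite -/C2; lra.
Qed.
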